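(* Let $\mathbb{T}$ be a time scale, $a<b$ in $\mathbb{T}$, and let $d,f$ be continuous functions on $[a,b]_{\mathbb{T}}$ such that $1+\mu(t)d(t)\neq 0$ for all $t\in[a,b]_{\mathbb{T}}$ and $$\sup_{t\in[a,b]_{\mathbb{T}}}|e_d(t,a)|\int_a^t|e_d(a,\sigma(s))|\,\Delta s<\infty.$$ Then the first-order dynamic equation $$x^{\Delta}(t)-d(t)x(t)-f(t)=0,\quad t\in[a,b]_{\mathbb{T}},$$ has Hyers–Ulam stability: for every $\varepsilon>0$, whenever $g\in C^1_{rd}([a,b]_{\mathbb{T}})$ satisfies $|g^{\Delta}(t)-d(t)g(t)-f(t)|\le\varepsilon$ for all $t\in[a,b]_{\mathbb{T}}$, there exists a solution $w\in C^1_{rd}([a,b]_{\mathbb{T}})$ of $w^\Delta-dw-f=0$ on $[a,b]_{\mathbb{T}}$ such that $|g(t)-w(t)|\le L\varepsilon$ for all $t\in[a,b]_{\mathbb{T}}$, for some constant $L>0$.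
   Context: A time scale $\mathbb{T}$ is a nonempty closed subset of $\mathbb{R}$; $[a,b]_{\mathbb{T}}:=[a,b]\cap\mathbb{T}$. $\sigma(t)=\inf\{s\in\mathbb{T}:s>t\}$ is the forward jump operator, $\mu(t)=\sigma(t)-t$ the graininess, $f^\Delta$ the delta derivative, and $\int\cdots\Delta s$ the delta integral. $C^1_{rd}([a,b]_{\mathbb{T}})$ denotes delta differentiable functions with rd-continuous delta derivative. For a regressive rd-continuous function $d$ (i.e. $1+\mu d\neq0$), $e_d(t,s)$ denotes the time-scale exponential function, the unique solution of $x^\Delta=d(t)x$, $x(s)=1$. *)

From Stdlib Require Import Reals Lra ClassicalEpsilon.
Open Scope R_scope.

Definition time_scale (T : R -> Prop) : Prop :=
  (exists x, T x) /\
  (forall x, (forall eps, 0 < eps -> exists y, T y /\ Rabs (y - x) < eps) -> T x).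

Definition in_ts (T : R -> Prop) (a b t : R) : Prop := T t /\ a <= t <= b.

(** s = inf {u in T | u > t}, with inf of the empty set := t
    (for t in T this is the convention inf emptyset = sup T = t). *)
Definition is_sigma (T : R -> Prop) (t s : R) : Prop :=
  ((exists u, T u /\ t < u) /\
     (forall u, T u -> t < u -> s <= u) /\
     (forall s', (forall u, T u -> t < u -> s' <= u) -> s' <= s))
  \/ ((forall u, T u -> u <= t) /\ s = t).

Definition fjump (T : R -> Prop) (t : R) : R :=
  epsilon (inhabits 0) (is_sigma T t).

Definition mu (T : R -> Prop) (t : R) : R := fjump T t - t.

Definition delta_deriv (T : R -> Prop) (f : R -> R) (fd : R) (t : R) : Prop :=
  forall eps, 0 < eps -> exists delta, 0 < delta /\
    forall s, T s -> Rabs (t - s) < delta ->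
      Rabs (f (fjump T t) - f s - fd * (fjump T t - s))
        <= eps * Rabs (fjump T t - s).

Definition cont_on (T : R -> Prop) (a b : R) (h : R -> R) : Prop :=
  forall t, in_ts T a b t -> forall eps, 0 < eps -> exists delta, 0 < delta /\
    forall s, in_ts T a b s -> Rabs (s - t) < delta -> Rabs (h s - h t) < eps.

Definition left_dense (T : R -> Prop) (t : R) : Prop :=
  forall eps, 0 < eps -> exists s, T s /\ t - eps < s < t.

Definition rd_cont (T : R -> Prop) (a b : R) (h : R -> R) : Prop :=
  forall t, in_ts T a b t ->
    (fjump T t = t ->
       forall eps, 0 < eps -> exists delta, 0 < delta /\
         forall s, in_ts T a b s -> Rabs (s - t) < delta -> Rabs (h s - h t) < eps) /\
    (left_dense T t ->
       exists l, forall eps, 0 < eps -> exists delta, 0 < delta /\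
         forall s, in_ts T a b s -> t - delta < s < t -> Rabs (h s - l) < eps).

Definition C1rd (T : R -> Prop) (a b : R) (g gd : R -> R) : Prop :=
  (forall t, in_ts T a b t -> delta_deriv T g (gd t) t) /\ rd_cont T a b gd.

Definition is_exp (T : R -> Prop) (a b : R) (d : R -> R) (e : R -> R -> R) : Prop :=
  forall s, in_ts T a b s ->
    e s s = 1 /\
    forall t, in_ts T a b t -> delta_deriv T (fun u => e u s) (d t * e t s) t.

(** F is a delta antiderivative of h on [a,b)_T, so that
    int_a^t h(s) Delta s = F t - F a (Cauchy delta integral). *)
Definition delta_antideriv (T : R -> Prop) (a b : R) (h F : R -> R) : Prop :=
  forall s, T s -> a <= s < b -> delta_deriv T F (h s) s.

(* The candidate solution is given by variation of constants,
     w = e(., a) (g(a) + int_a^. f(s) e(a, sigma s) Delta s),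
   where the Delta-integral is realised as the Riemann integral of the step function
   x |-> f(p) e(a, sigma p), p the last point of T before x.  For z = g - w the
   quotient z / e(., a) vanishes at a and has Delta-derivative h e(a, sigma(.)) with
   |h| <= eps, so the mean value inequality on time scales gives
   |z t| <= eps |e(t, a)| (F t - F a) <= eps M.  That e(., a) never vanishes comes from
   regressivity at right-scattered points and from a Gronwall argument at left-dense
   ones. *)

From Stdlib Require Import Reals Lra ClassicalEpsilon Classical.
From Coquelicot Require Import Coquelicot.
Open Scope R_scope.

Definition right_dense (T : R -> Prop) (t : R) : Prop :=
  forall eps, 0 < eps -> exists u, T u /\ t < u < t + eps.

Section JumpOperator.

Variable T : R -> Prop.

Lemma is_sigma_unique t s1 s2 : is_sigma T t s1 -> is_sigma T t s2 -> s1 = s2.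
Proof.
  intros [[[u [Hu1 Hu2]] [H1 H1']]|[H1 H1']] [[[v [Hv1 Hv2]] [H2 H2']]|[H2 H2']].
  - apply Rle_antisym; [apply H2'|apply H1']; assumption.
  - specialize (H2 u Hu1); lra.
  - specialize (H1 v Hv1); lra.
  - lra.
Qed.

Lemma is_sigma_exists t : exists s, is_sigma T t s.
Proof.
  destruct (classic (exists u, T u /\ t < u)) as [[u [Hu Htu]]|Hn].
  - set (E := fun y => forall v, T v -> t < v -> y <= v).
    destruct (completeness E) as [m [Hm1 Hm2]].
    + exists u. intros y Hy. apply Hy; auto.
    + exists t. intros v _ Hv; lra.
    + exists m. left. split; [exists u; auto|split].
      * intros v Hv Htv. apply Hm2. intros y Hy. apply Hy; auto.
      * intros s' Hs'. apply Hm1. exact Hs'.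
  - exists t. right. split; auto. intros u Hu.
    apply Rnot_lt_le. intros Htu. apply Hn. exists u; auto.
Qed.

Lemma fjump_spec t : is_sigma T t (fjump T t).
Proof. unfold fjump. apply epsilon_spec, is_sigma_exists. Qed.

Lemma fjump_ge t : t <= fjump T t.
Proof.
  destruct (fjump_spec t) as [[_ [_ Hsup]]|[_ ->]]; [|lra].
  apply Hsup. intros v _ Hv; lra.
Qed.

Lemma fjump_le t u : T u -> t < u -> fjump T t <= u.
Proof.
  intros Hu Htu.
  destruct (fjump_spec t) as [[_ [Hlow _]]|[Hmax _]].
  - apply Hlow; auto.
  - specialize (Hmax u Hu); lra.
Qed.

Lemma fjump_eq t u : T u -> t < u -> (forall v, T v -> t < v -> u <= v) -> fjump T t = u.
Proof.
  intros Hu Htu Hmin. apply (is_sigma_unique t); [apply fjump_spec|].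
  left. split; [exists u; auto|]. split; [exact Hmin|].
  intros s' Hs'. apply Hs'; auto.
Qed.

Lemma fjump_right_dense t : right_dense T t -> fjump T t = t.
Proof.
  intros Hrd. apply Rle_antisym; [|apply fjump_ge].
  apply Rnot_lt_le; intro H.
  destruct (Hrd (fjump T t - t)) as [u [Hu Hu2]]; [lra|].
  assert (fjump T t <= u) by (apply fjump_le; auto; lra). lra.
Qed.

Hypothesis HT : time_scale T.

Lemma fjump_in t : T t -> T (fjump T t).
Proof.
  intros Ht. destruct HT as [_ Hcl].
  destruct (fjump_spec t) as [[_ [Hlow Hsup]]|[_ ->]]; [|exact Ht].
  apply Hcl. intros eps Heps.
  destruct (classic (exists v, T v /\ t < v /\ v < fjump T t + eps)) as [[v [Hv [Hv1 Hv2]]]|Hn].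
  - exists v. split; auto. specialize (Hlow v Hv Hv1). rewrite Rabs_right; lra.
  - exfalso. assert (fjump T t + eps <= fjump T t); [|lra].
    apply Hsup. intros v Hv Htv. apply Rnot_lt_le. intros Hlt.
    apply Hn; exists v; auto.
Qed.

Lemma is_lub_in (E : R -> Prop) m :
  (forall x, E x -> T x) -> (exists x, E x) -> is_lub E m -> T m.
Proof.
  intros HET [x0 Hx0] [Hm1 Hm2]. destruct HT as [_ Hcl]. apply Hcl. intros eps Heps.
  destruct (classic (exists v, E v /\ m - eps < v)) as [[v [Hv1 Hv2]]|Hn].
  - exists v. split; auto. specialize (Hm1 v Hv1). rewrite Rabs_left1; lra.
  - exfalso. assert (m <= m - eps); [|lra]. apply Hm2. intros v Hv.
    apply Rnot_lt_le. intros Hlt. apply Hn; exists v; auto.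
Qed.

Definition last_point (a y : R) : R :=
  epsilon (inhabits 0) (is_lub (fun s => T s /\ a <= s <= y)).

Lemma last_point_spec a y : T a -> a <= y ->
  T (last_point a y) /\ a <= last_point a y <= y /\
  (forall u, T u -> a <= u <= y -> u <= last_point a y).
Proof.
  intros Ha Hay.
  assert (Hne : exists s, T s /\ a <= s <= y) by (exists a; split; auto; lra).
  assert (Hl : is_lub (fun s => T s /\ a <= s <= y) (last_point a y)).
  { unfold last_point. apply epsilon_spec.
    destruct (completeness (fun s => T s /\ a <= s <= y)) as [m Hm]; [|exact Hne|now exists m].
    exists y. intros s [_ Hs]; lra. }
  destruct Hl as [Hub Hleast]. split; [|split; [split|]].
  - apply (is_lub_in (fun s => T s /\ a <= s <= y)); [now intros x []|exact Hne|split; auto].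
  - apply Hub. split; auto; lra.
  - apply Hleast. intros s [_ Hs]; lra.
  - intros u Hu Hu2. apply Hub; auto.
Qed.

Lemma left_dense_or_jump c t : T c -> T t -> c < t ->
  left_dense T t \/ exists r, T r /\ c <= r < t /\ fjump T r = t.
Proof.
  intros Hc Ht Hct. destruct (classic (left_dense T t)) as [H|H]; [left; auto|right].
  apply not_all_ex_not in H. destruct H as [eps H].
  apply imply_to_and in H. destruct H as [Heps H].
  set (y := Rmax c (t - eps/2)).
  assert (Hy : c <= y < t) by (unfold y, Rmax; destruct Rle_dec; lra).
  destruct (last_point_spec c y Hc (proj1 Hy)) as [Hr1 [Hr2 Hr3]].
  exists (last_point c y). split; auto. split; [lra|].
  apply fjump_eq; auto; [lra|].
  intros v Hv Hrv. apply Rnot_lt_le. intros Hvt.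
  destruct (Rle_lt_dec v y) as [Hvy|Hvy].
  - specialize (Hr3 v Hv (conj (Rle_trans _ _ _ (proj1 Hr2) (Rlt_le _ _ Hrv)) Hvy)). lra.
  - apply H. exists v. split; auto. unfold y, Rmax in Hvy; destruct Rle_dec; lra.
Qed.

Lemma ts_induction c t (S : R -> Prop) : T c -> c <= t -> S c ->
  (forall tau, T tau -> c <= tau < t -> S tau -> right_dense T tau ->
     exists delta, 0 < delta /\ forall u, T u -> tau < u < tau + delta -> S u) ->
  (forall tau, T tau -> c < tau <= t -> (forall u, T u -> c <= u < tau -> S u) -> S tau) ->
  forall tau, T tau -> c <= tau <= t -> S tau.
Proof.
  intros Hc Hct H0 Hrd Hld tau0 Htau0 Hr0.
  apply NNPP; intro Hn0.
  set (A := fun u => T u /\ c <= u <= t /\ ~ S u).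
  set (L := fun y => forall u, A u -> y <= u).
  destruct (completeness L) as [m [Hm1 Hm2]].
  { exists tau0. intros y Hy. apply Hy. split; auto. }
  { exists c. intros u [_ [Hu _]]; lra. }
  assert (Hlow : forall u, A u -> m <= u).
  { intros u Hu. apply Hm2. intros y Hy; apply Hy; auto. }
  assert (Happ : forall eps, 0 < eps -> exists u, A u /\ u < m + eps).
  { intros eps Heps. apply NNPP; intro Hn.
    assert (L (m + eps)).
    { intros u Hu. apply Rnot_lt_le. intros Hlt. apply Hn; exists u; auto. }
    specialize (Hm1 _ H). lra. }
  assert (Hcm : c <= m) by (apply Hm1; intros u [_ [Hu _]]; lra).
  assert (Hmt0 : m <= tau0) by (apply Hlow; split; auto).
  assert (HmT : T m).
  { destruct HT as [_ Hcl]. apply Hcl. intros eps Heps.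
    destruct (Happ eps Heps) as [u [Hu1 Hu2]]. exists u. split; [apply Hu1|].
    specialize (Hlow u Hu1). rewrite Rabs_right; lra. }
  assert (Hbelow : forall u, T u -> c <= u < m -> S u).
  { intros u Hu Hu2. apply NNPP; intro Hn.
    assert (A u) by (split; auto; split; [lra|auto]).
    specialize (Hlow u H). lra. }
  assert (HSm : S m).
  { destruct (Rle_lt_or_eq_dec c m Hcm) as [Hlt|<-]; auto.
    apply Hld; auto. lra. }
  assert (Hnm : forall u, A u -> m < u).
  { intros u Hu. destruct (Rle_lt_or_eq_dec m u (Hlow u Hu)) as [?|<-]; auto.
    exfalso. destruct Hu as [_ [_ Hu]]; auto. }
  assert (Hrdm : right_dense T m).
  { intros eps Heps. destruct (Happ eps Heps) as [u [Hu1 Hu2]]. exists u.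
    split; [apply Hu1|]. specialize (Hnm u Hu1). lra. }
  assert (Hmt : m < t).
  { destruct (Happ 1 Rlt_0_1) as [u0 [Hu0 _]].
    specialize (Hnm u0 Hu0). destruct Hu0 as [_ [[_ ?] _]]. lra. }
  destruct (Hrd m HmT (conj Hcm Hmt) HSm Hrdm) as [delta [Hd Hd2]].
  destruct (Happ delta Hd) as [u [Hu1 Hu2]].
  pose proof (Hnm u Hu1).
  destruct Hu1 as [HuT [_ HnS]]. apply HnS, Hd2; [exact HuT|lra].
Qed.

End JumpOperator.

Lemma real_induction a b (Q : R -> Prop) : a <= b -> Q a ->
  (forall y, a <= y < b -> Q y -> exists delta, 0 < delta /\ forall z, y < z < y + delta -> Q z) ->
  (forall y, a < y <= b -> (forall z, a <= z < y -> Q z) -> Q y) -> Q b.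
Proof.
  intros Hab Ha Hr Hl.
  assert (HR : time_scale (fun _ => True)) by (split; [exists 0|]; auto).
  refine (ts_induction _ HR a b Q I Hab Ha _ _ b I _).
  - intros tau _ Hr2 HQ _. destruct (Hr tau Hr2 HQ) as [d [Hd Hd2]]. exists d; split; auto.
  - intros tau _ Hr2 Hb. apply Hl; auto.
  - lra.
Qed.

Definition ts_cont_at (T : R -> Prop) (h : R -> R) (t : R) : Prop :=
  forall eps, 0 < eps -> exists delta, 0 < delta /\
    forall s, T s -> Rabs (s - t) < delta -> Rabs (h s - h t) < eps.

Section DeltaCalculus.

Variable T : R -> Prop.

Lemma delta_deriv_eq f g fd gd t : (forall u, f u = g u) -> fd = gd ->
  delta_deriv T f fd t -> delta_deriv T g gd t.
Proof.
  intros Hfg <- Hd eps Heps. destruct (Hd eps Heps) as [d [Hd1 Hd2]].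
  exists d. split; auto. intros s Hs Hst. rewrite <- !Hfg. auto.
Qed.

Lemma delta_deriv_jump f fd t : T t -> delta_deriv T f fd t ->
  f (fjump T t) - f t = fd * (fjump T t - t).
Proof.
  intros Ht Hd. pose proof (fjump_ge T t) as Hge.
  enough (Rabs (f (fjump T t) - f t - fd * (fjump T t - t)) <= 0)
    by (apply Rabs_le_between in H; lra).
  apply Rle_plus_epsilon. intros eps Heps.
  destruct (Hd (eps / (fjump T t - t + 1))) as [delta [Hdel H]].
  { apply Rdiv_lt_0_compat; lra. }
  specialize (H t Ht). rewrite Rminus_diag, Rabs_R0 in H. specialize (H Hdel).
  eapply Rle_trans; [apply H|]. rewrite (Rabs_right (fjump T t - t)) by lra.
  rewrite Rplus_0_l.
  apply (Rmult_le_reg_r (fjump T t - t + 1)); [lra|].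
  unfold Rdiv. field_simplify; [|lra]. nra.
Qed.

Lemma delta_deriv_cont f fd t : T t -> delta_deriv T f fd t -> ts_cont_at T f t.
Proof.
  intros Ht Hd eps Heps. pose proof (delta_deriv_jump f fd t Ht Hd) as Hst.
  set (m := fjump T t - t). assert (Hm : 0 <= m) by (pose proof (fjump_ge T t); unfold m; lra).
  assert (Hfd : 0 <= Rabs fd) by apply Rabs_pos.
  destruct (Hd (eps / (2 * (m + 1)))) as [d0 [Hd0 H]].
  { apply Rdiv_lt_0_compat; lra. }
  set (d1 := eps / (4 * (Rabs fd + 1))).
  assert (Hd1 : 0 < d1) by (apply Rdiv_lt_0_compat; lra).
  exists (Rmin d0 (Rmin 1 d1)).
  split; [apply Rmin_glb_lt; [lra|apply Rmin_glb_lt; lra]|].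
  intros s Hs Hst2.
  pose proof (Rmin_l d0 (Rmin 1 d1)); pose proof (Rmin_r d0 (Rmin 1 d1)).
  pose proof (Rmin_l 1 d1); pose proof (Rmin_r 1 d1).
  specialize (H s Hs). rewrite <- Rabs_Ropp in H. replace (- (t - s)) with (s - t) in H by ring.
  specialize (H ltac:(lra)).
  assert (Hb : Rabs (fjump T t - s) <= m + 1).
  { replace (fjump T t - s) with (m - (s - t)) by (unfold m; ring).
    eapply Rle_trans; [apply Rabs_triang|]. rewrite Rabs_Ropp, (Rabs_right m) by lra. lra. }
  assert (Hx : eps / (2 * (m + 1)) * Rabs (fjump T t - s) <= eps / 2).
  { replace (eps / 2) with (eps / (2 * (m + 1)) * (m + 1)) by (field; lra).
    apply Rmult_le_compat_l; auto. left; apply Rdiv_lt_0_compat; lra. }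
  assert (Hy : Rabs fd * Rabs (s - t) <= eps / 4).
  { apply Rle_trans with (Rabs fd * d1); [apply Rmult_le_compat_l; lra|].
    unfold d1. apply (Rmult_le_reg_r (4 * (Rabs fd + 1))); [lra|].
    field_simplify; [|lra]. nra. }
  replace (f s - f t) with (- (f (fjump T t) - f s - fd * (fjump T t - s)) + fd * (s - t))
    by (unfold m in Hst; lra).
  eapply Rle_lt_trans; [apply Rabs_triang|]. rewrite Rabs_Ropp, Rabs_mult. lra.
Qed.

Lemma delta_deriv_lin f g fd gd al be t : delta_deriv T f fd t -> delta_deriv T g gd t ->
  delta_deriv T (fun u => al * f u + be * g u) (al * fd + be * gd) t.
Proof.
  intros Hf Hg eps Heps.
  set (K := Rabs al + Rabs be + 1).
  assert (HK : 0 < K) by (unfold K; pose proof (Rabs_pos al); pose proof (Rabs_pos be); lra).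
  destruct (Hf (eps / K)) as [d1 [Hd1 H1]]; [apply Rdiv_lt_0_compat; lra|].
  destruct (Hg (eps / K)) as [d2 [Hd2 H2]]; [apply Rdiv_lt_0_compat; lra|].
  exists (Rmin d1 d2). split; [apply Rmin_glb_lt; auto|].
  intros s Hs Hst. pose proof (Rmin_l d1 d2); pose proof (Rmin_r d1 d2).
  specialize (H1 s Hs ltac:(lra)). specialize (H2 s Hs ltac:(lra)).
  set (D := Rabs (fjump T t - s)).
  replace (al * f (fjump T t) + be * g (fjump T t) - (al * f s + be * g s) -
     (al * fd + be * gd) * (fjump T t - s)) with
    (al * (f (fjump T t) - f s - fd * (fjump T t - s))
     + be * (g (fjump T t) - g s - gd * (fjump T t - s))) by ring.
  eapply Rle_trans; [apply Rabs_triang|]. rewrite !Rabs_mult.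
  assert (A1 : Rabs al * Rabs (f (fjump T t) - f s - fd * (fjump T t - s)) <= Rabs al * (eps / K * D))
    by (apply Rmult_le_compat_l; auto; apply Rabs_pos).
  assert (A2 : Rabs be * Rabs (g (fjump T t) - g s - gd * (fjump T t - s)) <= Rabs be * (eps / K * D))
    by (apply Rmult_le_compat_l; auto; apply Rabs_pos).
  assert (A3 : (Rabs al + Rabs be) * (eps / K * D) <= eps * D).
  { replace (eps * D) with (K * (eps / K * D)) by (field; lra).
    apply Rmult_le_compat_r; [|unfold K; lra].
    apply Rmult_le_pos; [left; apply Rdiv_lt_0_compat; lra|apply Rabs_pos]. }
  lra.
Qed.

Lemma delta_deriv_scal_id k t : delta_deriv T (fun y => k * y) k t.
Proof.
  intros eps Heps. exists 1. split; [lra|]. intros s _ _.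
  replace (k * fjump T t - k * s - k * (fjump T t - s)) with 0 by ring.
  rewrite Rabs_R0. apply Rmult_le_pos; [lra|apply Rabs_pos].
Qed.

Lemma delta_deriv_const k t : delta_deriv T (fun _ => k) 0 t.
Proof.
  intros eps Heps. exists 1. split; [lra|]. intros s _ _.
  replace (k - k - 0 * (fjump T t - s)) with 0 by ring.
  rewrite Rabs_R0. apply Rmult_le_pos; [lra|apply Rabs_pos].
Qed.

Lemma delta_deriv_scal f fd c t : delta_deriv T f fd t ->
  delta_deriv T (fun u => c * f u) (c * fd) t.
Proof.
  intros H. apply (delta_deriv_eq (fun u => c * f u + 0 * 0) _ (c * fd + 0 * 0));
    [intro; ring|ring|].
  apply delta_deriv_lin; auto. apply delta_deriv_const.
Qed.

Lemma delta_deriv_mul f g fd gd t : T t -> delta_deriv T f fd t -> delta_deriv T g gd t ->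
  delta_deriv T (fun u => f u * g u) (fd * g t + f (fjump T t) * gd) t.
Proof.
  intros Ht Hf Hg eps Heps.
  set (A := Rabs (f (fjump T t))). set (G := Rabs (g t)).
  assert (HA : 0 <= A) by apply Rabs_pos. assert (HG : 0 <= G) by apply Rabs_pos.
  assert (Hfd : 0 <= Rabs fd) by apply Rabs_pos.
  set (e3 := Rmin 1 (eps / (3 * (Rabs fd + 1)))).
  assert (He3 : 0 < e3) by (apply Rmin_glb_lt; [lra|apply Rdiv_lt_0_compat; lra]).
  destruct (Hg (eps / (3 * (A + 1)))) as [d1 [Hd1 H1]]; [apply Rdiv_lt_0_compat; lra|].
  destruct (Hf (eps / (3 * (G + 2)))) as [d2 [Hd2 H2]]; [apply Rdiv_lt_0_compat; lra|].
  destruct (delta_deriv_cont g gd t Ht Hg e3 He3) as [d3 [Hd3 H3]].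
  exists (Rmin d1 (Rmin d2 d3)). split; [repeat apply Rmin_glb_lt; auto|].
  intros s Hs Hst.
  pose proof (Rmin_l d1 (Rmin d2 d3)); pose proof (Rmin_r d1 (Rmin d2 d3));
  pose proof (Rmin_l d2 d3); pose proof (Rmin_r d2 d3).
  specialize (H1 s Hs ltac:(lra)). specialize (H2 s Hs ltac:(lra)).
  rewrite <- Rabs_Ropp in Hst. replace (- (t - s)) with (s - t) in Hst by ring.
  specialize (H3 s Hs ltac:(lra)).
  assert (He3le : e3 <= 1 /\ e3 <= eps / (3 * (Rabs fd + 1))) by (split; [apply Rmin_l|apply Rmin_r]).
  set (sg := fjump T t) in *. set (D := Rabs (sg - s)). assert (HD : 0 <= D) by apply Rabs_pos.
  replace (f sg * g sg - f s * g s - (fd * g t + f sg * gd) * (sg - s)) with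
    (f sg * (g sg - g s - gd * (sg - s)) + g s * (f sg - f s - fd * (sg - s))
     + fd * (g s - g t) * (sg - s)) by ring.
  eapply Rle_trans; [apply Rabs_triang|].
  eapply Rle_trans; [apply Rplus_le_compat_r; apply Rabs_triang|].
  rewrite !Rabs_mult. fold A D.
  assert (B1 : A * Rabs (g sg - g s - gd * (sg - s)) <= eps / 3 * D).
  { apply Rle_trans with (A * (eps / (3 * (A + 1)) * D)); [apply Rmult_le_compat_l; auto|].
    replace (eps / 3 * D) with ((A + 1) * (eps / (3 * (A + 1)) * D)) by (field; lra).
    apply Rmult_le_compat_r; [apply Rmult_le_pos; [left; apply Rdiv_lt_0_compat; lra|auto]|lra]. }
  assert (HgS : Rabs (g s) <= G + 1) by (pose proof (Rabs_triang_inv (g s) (g t)); unfold G; lra).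
  assert (B2 : Rabs (g s) * Rabs (f sg - f s - fd * (sg - s)) <= eps / 3 * D).
  { apply Rle_trans with ((G + 2) * (eps / (3 * (G + 2)) * D)).
    - apply Rmult_le_compat; auto; try apply Rabs_pos; lra.
    - right; field; lra. }
  assert (B3 : Rabs fd * Rabs (g s - g t) * D <= eps / 3 * D).
  { apply Rmult_le_compat_r; auto.
    apply Rle_trans with (Rabs fd * (eps / (3 * (Rabs fd + 1)))); [apply Rmult_le_compat_l; lra|].
    apply (Rmult_le_reg_r (3 * (Rabs fd + 1))); [lra|].
    field_simplify; [|lra]. nra. }
  lra.
Qed.

Lemma ts_cont_at_away_from_zero h t : ts_cont_at T h t -> h t <> 0 ->
  exists delta, 0 < delta /\ forall s, T s -> Rabs (s - t) < delta -> Rabs (h t) / 2 <= Rabs (h s).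
Proof.
  intros Hh Hnz. pose proof (Rabs_pos_lt _ Hnz).
  destruct (Hh (Rabs (h t) / 2)) as [d [Hd Hd2]]; [lra|].
  exists d. split; auto. intros s Hs Hst. specialize (Hd2 s Hs Hst).
  pose proof (Rabs_triang_inv (h t) (h s)). rewrite <- Rabs_Ropp in Hd2.
  replace (- (h s - h t)) with (h t - h s) in Hd2 by ring. lra.
Qed.

Lemma ts_cont_at_inv h t : ts_cont_at T h t -> h t <> 0 -> ts_cont_at T (fun y => / h y) t.
Proof.
  intros Hh Hnz eps Heps.
  pose proof (Rabs_pos_lt _ Hnz) as Hp. set (m := Rabs (h t)) in *.
  destruct (ts_cont_at_away_from_zero h t Hh Hnz) as [d1 [Hd1 Hlow]].
  destruct (Hh (eps * m * m / 2)) as [d2 [Hd2 Hclose]].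
  { apply Rdiv_lt_0_compat; [repeat apply Rmult_lt_0_compat|]; lra. }
  exists (Rmin d1 d2). split; [apply Rmin_glb_lt; auto|].
  intros s Hs Hst. pose proof (Rmin_l d1 d2); pose proof (Rmin_r d1 d2).
  specialize (Hlow s Hs ltac:(lra)). specialize (Hclose s Hs ltac:(lra)). fold m in Hlow.
  assert (Hns : h s <> 0) by (intro Z; rewrite Z, Rabs_R0 in Hlow; lra).
  replace (/ h s - / h t) with ((h s - h t) * / - (h s * h t)) by (field; auto).
  rewrite Rabs_mult, Rabs_inv, Rabs_Ropp, Rabs_mult. fold m.
  apply Rle_lt_trans with (Rabs (h s - h t) * / (m / 2 * m)).
  - apply Rmult_le_compat_l; [apply Rabs_pos|]. apply Rinv_le_contravar.
    + apply Rmult_lt_0_compat; lra.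
    + apply Rmult_le_compat_r; lra.
  - apply Rlt_le_trans with ((eps * m * m / 2) * / (m / 2 * m)).
    + apply Rmult_lt_compat_r; [apply Rinv_0_lt_compat, Rmult_lt_0_compat|]; lra.
    + right. field. lra.
Qed.

(* The remainder splits into the remainder of E, divided by E^sigma E s, plus a term
   controlled by the continuity of E at t. *)
Lemma delta_deriv_inv E Ed t : T t -> delta_deriv T E Ed t -> E t <> 0 -> E (fjump T t) <> 0 ->
  delta_deriv T (fun u => / E u) (- Ed / (E t * E (fjump T t))) t.
Proof.
  intros Ht HE Hn Hns eps Heps.
  set (sg := fjump T t) in *.
  assert (HEt : 0 < Rabs (E t)) by (apply Rabs_pos_lt; auto).
  assert (HEsg : 0 < Rabs (E sg)) by (apply Rabs_pos_lt; auto).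
  assert (HEd : 0 <= Rabs Ed) by apply Rabs_pos.
  set (c := Rabs (E sg) * (Rabs (E t) / 2)).
  assert (Hc : 0 < c) by (unfold c; nra).
  set (eta := eps * Rabs (E t) * c / (2 * (Rabs Ed + 1))).
  assert (Heta : 0 < eta).
  { apply Rdiv_lt_0_compat; [repeat apply Rmult_lt_0_compat|]; lra. }
  pose proof (delta_deriv_cont E Ed t Ht HE) as HEc.
  destruct (HE (eps * c / 2)) as [d1 [Hd1 H1]]; [apply Rdiv_lt_0_compat; [apply Rmult_lt_0_compat|]; lra|].
  destruct (HEc eta Heta) as [d2 [Hd2 H2]].
  destruct (ts_cont_at_away_from_zero E t HEc Hn) as [d3 [Hd3 H3]].
  exists (Rmin d1 (Rmin d2 d3)). split; [repeat apply Rmin_glb_lt; auto|].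
  intros s Hs Hst.
  pose proof (Rmin_l d1 (Rmin d2 d3)); pose proof (Rmin_r d1 (Rmin d2 d3));
  pose proof (Rmin_l d2 d3); pose proof (Rmin_r d2 d3).
  specialize (H1 s Hs ltac:(lra)).
  rewrite <- Rabs_Ropp in Hst. replace (- (t - s)) with (s - t) in Hst by ring.
  specialize (H2 s Hs ltac:(lra)). specialize (H3 s Hs ltac:(lra)).
  assert (Hns' : E s <> 0) by (intro Z; rewrite Z, Rabs_R0 in H3; lra).
  set (X := E sg - E s - Ed * (sg - s)) in *.
  set (D := Rabs (sg - s)). assert (HD : 0 <= D) by apply Rabs_pos.
  replace (/ E sg - / E s - - Ed / (E t * E sg) * (sg - s)) with
    (- X * / (E sg * E s) + Ed * (sg - s) * (E s - E t) * / (E t * (E sg * E s)))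
    by (unfold X; field; auto).
  assert (Hlow : c <= Rabs (E sg) * Rabs (E s)) by (apply Rmult_le_compat_l; lra).
  eapply Rle_trans; [apply Rabs_triang|].
  rewrite !Rabs_mult, Rabs_Ropp, !Rabs_inv, !Rabs_mult. fold D.
  assert (B1 : Rabs X * / (Rabs (E sg) * Rabs (E s)) <= eps / 2 * D).
  { apply Rle_trans with (Rabs X * / c).
    - apply Rmult_le_compat_l; [apply Rabs_pos|]. apply Rinv_le_contravar; auto.
    - apply (Rmult_le_reg_r c); auto. rewrite Rmult_assoc, Rinv_l, Rmult_1_r by lra.
      eapply Rle_trans; [apply H1|]. unfold D, sg. right; field. }
  assert (B2 : Rabs Ed * D * Rabs (E s - E t) * / (Rabs (E t) * (Rabs (E sg) * Rabs (E s)))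
               <= eps / 2 * D).
  { apply Rle_trans with (Rabs Ed * D * eta * / (Rabs (E t) * c)).
    - apply Rmult_le_compat.
      + apply Rmult_le_pos; [apply Rmult_le_pos|]; auto; apply Rabs_pos.
      + left; apply Rinv_0_lt_compat. apply Rmult_lt_0_compat; [|apply Rmult_lt_0_compat]; auto.
        apply Rabs_pos_lt; auto.
      + apply Rmult_le_compat_l; [apply Rmult_le_pos; auto|lra].
      + apply Rinv_le_contravar; [apply Rmult_lt_0_compat; auto|].
        apply Rmult_le_compat_l; lra.
    - replace (Rabs Ed * D * eta * / (Rabs (E t) * c))
        with ((Rabs Ed / (Rabs Ed + 1)) * (eps / 2 * D)) by (unfold eta; field; lra).
      assert (Rabs Ed / (Rabs Ed + 1) <= 1).
      { apply (Rmult_le_reg_r (Rabs Ed + 1)); [lra|]. field_simplify; lra. }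
      assert (0 <= eps / 2 * D) by (apply Rmult_le_pos; lra).
      nra. }
  lra.
Qed.

End DeltaCalculus.

Section IncrementInequality.

Variable T : R -> Prop.
Hypothesis HT : time_scale T.

Lemma increment_le_right_dense U V u v tau eta : right_dense T tau ->
  delta_deriv T U u tau -> delta_deriv T V v tau -> Rabs u <= v -> 0 < eta ->
  exists delta, 0 < delta /\ forall w, T w -> tau < w < tau + delta ->
    Rabs (U w - U tau) <= V w - V tau + eta * (w - tau).
Proof.
  intros Hrd HdU HdV Huv Heta.
  pose proof (fjump_right_dense T tau Hrd) as Hf.
  destruct (HdU (eta / 2)) as [d1 [Hd1 H1]]; [lra|].
  destruct (HdV (eta / 2)) as [d2 [Hd2 H2]]; [lra|].
  exists (Rmin d1 d2). split; [apply Rmin_glb_lt; auto|].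
  intros w Hw Hw2. rewrite Hf in H1, H2.
  pose proof (Rmin_l d1 d2); pose proof (Rmin_r d1 d2).
  specialize (H1 w Hw ltac:(rewrite Rabs_left; lra)).
  specialize (H2 w Hw ltac:(rewrite Rabs_left; lra)).
  rewrite (Rabs_left (tau - w)) in H1, H2 by lra.
  apply Rabs_le_between in H1. apply Rabs_le_between in H2.
  apply Rabs_le_between in Huv. apply Rabs_le_between.
  assert (P1 : u * (w - tau) <= v * (w - tau)) by (apply Rmult_le_compat_r; lra).
  assert (P2 : - u * (w - tau) <= v * (w - tau)) by (apply Rmult_le_compat_r; lra).
  nra.
Qed.

Lemma increment_le_slack c t U V u v eta : T c -> c <= t -> 0 < eta ->
  (forall s, T s -> c <= s < t ->
     delta_deriv T U (u s) s /\ delta_deriv T V (v s) s /\ Rabs (u s) <= v s) ->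
  (left_dense T t -> ts_cont_at T U t /\ ts_cont_at T V t) ->
  forall tau, T tau -> c <= tau <= t ->
    Rabs (U tau - U c) <= V tau - V c + eta * (tau - c).
Proof.
  intros Hc Hct Heta Hder Hcont.
  apply (ts_induction T HT); auto.
  - rewrite Rminus_diag, Rabs_R0. lra.
  - intros tau Htau Hr HS Hrd.
    destruct (Hder tau Htau Hr) as [HdU [HdV Huv]].
    destruct (increment_le_right_dense U V _ _ tau eta Hrd HdU HdV Huv Heta) as [d [Hd Hloc]].
    exists d. split; auto. intros w Hw Hw2. specialize (Hloc w Hw Hw2).
    pose proof (Rabs_triang (U tau - U c) (U w - U tau)).
    replace (U tau - U c + (U w - U tau)) with (U w - U c) in H by ring. lra.
  - intros tau Htau Hr Hbel.
    destruct (left_dense_or_jump T HT c tau Hc Htau (proj1 Hr)) as [Hld|[r [Hr1 [Hr2 Hr3]]]].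
    + assert (Hct2 : ts_cont_at T U tau /\ ts_cont_at T V tau).
      { destruct (Rle_lt_or_eq_dec tau t (proj2 Hr)) as [Hlt| ->]; auto.
        destruct (Hder tau Htau (conj (Rlt_le _ _ (proj1 Hr)) Hlt)) as [HdU [HdV _]].
        split; eapply delta_deriv_cont; eauto. }
      destruct Hct2 as [HcU HcV].
      apply Rle_plus_epsilon. intros eps Heps.
      destruct (HcU (eps / 2)) as [d1 [Hd1 H1]]; [lra|].
      destruct (HcV (eps / 2)) as [d2 [Hd2 H2]]; [lra|].
      destruct (Hld (Rmin (Rmin d1 d2) (tau - c))) as [w [Hw Hw2]].
      { repeat apply Rmin_glb_lt; lra. }
      pose proof (Rmin_l (Rmin d1 d2) (tau - c)); pose proof (Rmin_r (Rmin d1 d2) (tau - c)).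
      pose proof (Rmin_l d1 d2); pose proof (Rmin_r d1 d2).
      specialize (H1 w Hw ltac:(rewrite Rabs_left; lra)).
      specialize (H2 w Hw ltac:(rewrite Rabs_left; lra)).
      specialize (Hbel w Hw ltac:(lra)).
      apply Rabs_le_between. apply Rabs_le_between in Hbel.
      apply Rlt_le, Rabs_le_between in H1. apply Rlt_le, Rabs_le_between in H2.
      assert (eta * (w - c) <= eta * (tau - c)) by (apply Rmult_le_compat_l; lra).
      lra.
    + specialize (Hbel r Hr1 ltac:(lra)).
      destruct (Hder r Hr1 ltac:(lra)) as [HdU [HdV Huv]].
      pose proof (delta_deriv_jump T U (u r) r Hr1 HdU) as S1.
      pose proof (delta_deriv_jump T V (v r) r Hr1 HdV) as S2.
      rewrite Hr3 in S1, S2.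
      apply Rabs_le_between in Hbel. apply Rabs_le_between in Huv. apply Rabs_le_between.
      assert (P1 : u r * (tau - r) <= v r * (tau - r)) by (apply Rmult_le_compat_r; lra).
      assert (P2 : - u r * (tau - r) <= v r * (tau - r)) by (apply Rmult_le_compat_r; lra).
      assert (eta * (r - c) <= eta * (tau - c)) by (apply Rmult_le_compat_l; lra).
      nra.
Qed.

Lemma increment_le c t U V u v : T c -> T t -> c <= t ->
  (forall s, T s -> c <= s < t ->
     delta_deriv T U (u s) s /\ delta_deriv T V (v s) s /\ Rabs (u s) <= v s) ->
  (left_dense T t -> ts_cont_at T U t /\ ts_cont_at T V t) ->
  Rabs (U t - U c) <= V t - V c.
Proof.
  intros Hc Ht Hct Hder Hcont.
  apply Rle_plus_epsilon. intros eps Heps.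
  assert (Heta : 0 < eps / (t - c + 1)) by (apply Rdiv_lt_0_compat; lra).
  pose proof (increment_le_slack c t U V u v _ Hc Hct Heta Hder Hcont t Ht (conj Hct (Rle_refl t))).
  assert (eps / (t - c + 1) * (t - c) <= eps).
  { apply (Rmult_le_reg_r (t - c + 1)); [lra|]. field_simplify; [|lra]. nra. }
  lra.
Qed.

Lemma cont_on_bounded c t x : T c -> T t -> c <= t -> cont_on T c t x ->
  exists M, forall u, T u -> c <= u <= t -> Rabs (x u) <= M.
Proof.
  intros Hc Ht Hct Hx.
  enough (H : forall tau, T tau -> c <= tau <= t ->
            exists M, forall u, T u -> c <= u <= tau -> Rabs (x u) <= M)
    by (apply (H t); auto; lra).
  apply (ts_induction T HT); auto.
  - exists (Rabs (x c)). intros u _ Hu. replace u with c by lra. lra.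
  - intros tau Htau Hr [M HM] Hrd.
    destruct (Hx tau (conj Htau (conj (proj1 Hr) (Rlt_le _ _ (proj2 Hr)))) 1 Rlt_0_1)
      as [d [Hd Hd2]].
    exists (Rmin d (t - tau)). split; [apply Rmin_glb_lt; lra|].
    intros w Hw Hw2. exists (Rmax M (Rabs (x tau) + 1)). intros u Hu Hu2.
    pose proof (Rmin_l d (t - tau)); pose proof (Rmin_r d (t - tau)).
    destruct (Rle_lt_dec u tau).
    + eapply Rle_trans; [apply HM; auto; lra|apply Rmax_l].
    + assert (Hut : c <= u <= t) by lra.
      assert (Hdist : Rabs (u - tau) < d) by (rewrite Rabs_right; lra).
      specialize (Hd2 u (conj Hu Hut) Hdist).
      eapply Rle_trans; [|apply Rmax_r].
      pose proof (Rabs_triang_inv (x u) (x tau)). lra.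
  - intros tau Htau Hr Hbel.
    destruct (left_dense_or_jump T HT c tau Hc Htau (proj1 Hr)) as [Hld|[r [Hr1 [Hr2 Hr3]]]].
    + destruct (Hx tau (conj Htau (conj (Rlt_le _ _ (proj1 Hr)) (proj2 Hr))) 1 Rlt_0_1)
        as [d [Hd Hd2]].
      destruct (Hld (Rmin d (tau - c))) as [w [Hw Hw2]]; [apply Rmin_glb_lt; lra|].
      pose proof (Rmin_l d (tau - c)); pose proof (Rmin_r d (tau - c)).
      destruct (Hbel w Hw ltac:(lra)) as [M HM].
      exists (Rmax M (Rabs (x tau) + 1)). intros u Hu Hu2.
      destruct (Rle_lt_dec u w).
      * eapply Rle_trans; [apply HM; auto; lra|apply Rmax_l].
      * assert (Hut : c <= u <= t) by lra.
        assert (Hdist : Rabs (u - tau) < d) by (rewrite Rabs_left1; lra).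
        specialize (Hd2 u (conj Hu Hut) Hdist).
        eapply Rle_trans; [|apply Rmax_r].
        pose proof (Rabs_triang_inv (x u) (x tau)). lra.
    + destruct (Hbel r Hr1 ltac:(lra)) as [M HM].
      exists (Rmax M (Rabs (x tau))). intros u Hu Hu2.
      destruct (Rle_lt_dec u r).
      * eapply Rle_trans; [apply HM; auto; lra|apply Rmax_l].
      * destruct (Rle_lt_or_eq_dec u tau (proj2 Hu2)) as [Hlt| ->]; [|apply Rmax_r].
        pose proof (fjump_le T r u Hu r0). lra.
Qed.

End IncrementInequality.

Definition solves_homogeneous (T : R -> Prop) (a b : R) (d x : R -> R) : Prop :=
  forall u, in_ts T a b u -> delta_deriv T x (d u * x u) u.

Section HomogeneousEquation.

Variable T : R -> Prop.
Hypothesis HT : time_scale T.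
Variables (a b : R) (d : R -> R).
Hypotheses (Ha : T a) (Hb : T b) (Hab : a <= b) (Hd : cont_on T a b d).
Hypothesis Hreg : forall t, in_ts T a b t -> 1 + mu T t * d t <> 0.

(* Gronwall on a short interval [s0, tau] of length below 1/(2D): the supremum m of
   |x| there satisfies m <= m/2. *)
Lemma homogeneous_zero_left_dense x D tau : T tau -> a < tau <= b ->
  (forall u, in_ts T a b u -> Rabs (d u) <= D) -> solves_homogeneous T a b d x ->
  left_dense T tau -> x tau = 0 ->
  exists w, T w /\ a <= w < tau /\ x w = 0.
Proof.
  intros Htau Hr HD Hx Hld Hx0.
  assert (HD0 : 0 <= D).
  { specialize (HD a (conj Ha (conj (Rle_refl a) Hab))). pose proof (Rabs_pos (d a)); lra. }
  set (del := / (2 * (D + 1))).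
  assert (Hdel : 0 < del) by (apply Rinv_0_lt_compat; lra).
  destruct (Hld (Rmin del (tau - a))) as [s0 [Hs0 Hs0r]]; [apply Rmin_glb_lt; lra|].
  pose proof (Rmin_l del (tau - a)); pose proof (Rmin_r del (tau - a)).
  exists s0. split; auto. split; [lra|].
  assert (Hcont : cont_on T s0 tau x).
  { intros u [Hu Hu2] eps Heps.
    assert (Hin : in_ts T a b u) by (split; auto; lra).
    destruct (delta_deriv_cont T x _ u Hu (Hx u Hin) eps Heps) as [dd [Hdd Hdd2]].
    exists dd; split; auto. intros s [Hs _] Hss. apply Hdd2; auto. }
  destruct (cont_on_bounded T HT s0 tau x Hs0 Htau ltac:(lra) Hcont) as [M HM].
  set (E := fun y => exists u, T u /\ s0 <= u <= tau /\ y = Rabs (x u)).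
  destruct (completeness E) as [m [Hm1 Hm2]].
  { exists M. intros y [u [Hu [Hu2 ->]]]. apply HM; auto. }
  { exists (Rabs (x s0)), s0. split; auto. split; [lra|auto]. }
  assert (Hum : forall u, T u -> s0 <= u <= tau -> Rabs (x u) <= m).
  { intros u Hu Hu2. apply Hm1. exists u; auto. }
  assert (Hm0 : 0 <= m) by (pose proof (Hum s0 Hs0 ltac:(lra)); pose proof (Rabs_pos (x s0)); lra).
  assert (Hhalf : forall u, T u -> s0 <= u <= tau -> Rabs (x u) <= m / 2).
  { intros u Hu Hu2.
    assert (Hc : Rabs (x tau - x u) <= (D * m) * tau - (D * m) * u).
    { apply (increment_le T HT u tau x (fun y => (D * m) * y) (fun s => d s * x s) (fun _ => D * m));
        auto; try lra.
      - intros s Hs Hs2. split; [apply Hx; split; auto; lra|].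
        split; [apply delta_deriv_scal_id|].
        rewrite Rabs_mult. apply Rmult_le_compat; try apply Rabs_pos.
        + apply HD; split; auto; lra.
        + apply Hum; auto; lra.
      - intros _. split.
        + apply (delta_deriv_cont T x (d tau * x tau)); auto. apply Hx; split; auto; lra.
        + apply (delta_deriv_cont T _ (D * m)); auto. apply delta_deriv_scal_id. }
    rewrite Hx0, Rminus_0_l, Rabs_Ropp in Hc.
    assert (D * m * (tau - u) <= m / 2); [|lra].
    apply Rle_trans with ((D * m) * del).
    - apply Rmult_le_compat_l; [apply Rmult_le_pos|]; lra.
    - unfold del. apply (Rmult_le_reg_r (2 * (D + 1))); [lra|]. field_simplify; [|lra]. nra. }
  assert (m <= m / 2) by (apply Hm2; intros y [u [Hu [Hu2 ->]]]; apply Hhalf; auto).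
  assert (Hs0m : Rabs (x s0) <= 0) by (pose proof (Hum s0 Hs0 ltac:(lra)); lra).
  apply Rabs_le_between in Hs0m. lra.
Qed.

(* Regressivity keeps x nonzero across right-scattered points, and the previous
   lemma across left-dense ones. *)
Lemma homogeneous_nonvanishing x : solves_homogeneous T a b d x ->
  x a <> 0 -> forall t, in_ts T a b t -> x t <> 0.
Proof.
  intros Hx Hxa.
  destruct (cont_on_bounded T HT a b d Ha Hb Hab Hd) as [D HD].
  intros t [Ht Ht2]. revert t Ht Ht2.
  apply (ts_induction T HT a b (fun t => x t <> 0)); auto.
  - intros tau Htau Hr Hne Hrd.
    destruct (delta_deriv_cont T x _ tau Htau (Hx tau ltac:(split; auto; lra)) (Rabs (x tau)))
      as [dd [Hdd Hdd2]]; [apply Rabs_pos_lt; auto|].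
    exists dd. split; auto. intros u Hu Hu2 Hz.
    assert (Hdist : Rabs (u - tau) < dd) by (rewrite Rabs_right; lra).
    specialize (Hdd2 u Hu Hdist). rewrite Hz, Rminus_0_l, Rabs_Ropp in Hdd2. lra.
  - intros tau Htau Hr Hbel.
    destruct (left_dense_or_jump T HT a tau Ha Htau (proj1 Hr)) as [Hld|[r [Hr1 [Hr2 Hr3]]]].
    + intro Hz.
      destruct (homogeneous_zero_left_dense x D tau Htau Hr (fun u Hu => HD u (proj1 Hu) (proj2 Hu))
                  Hx Hld Hz) as [w [Hw [Hw2 Hw3]]].
      apply (Hbel w Hw Hw2 Hw3).
    + assert (Hin : in_ts T a b r) by (split; auto; lra).
      pose proof (delta_deriv_jump T x _ r Hr1 (Hx r Hin)) as Hs.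
      specialize (Hreg r Hin). unfold mu in Hreg. rewrite Hr3 in Hs, Hreg.
      specialize (Hbel r Hr1 ltac:(lra)).
      replace (x tau) with ((1 + (tau - r) * d r) * x r) by lra.
      apply Rmult_integral_contrapositive; auto.
Qed.

Lemma is_exp_mul_inv e : is_exp T a b d e -> forall r, in_ts T a b r -> e a r * e r a = 1.
Proof.
  intros He r Hr.
  assert (Hia : in_ts T a b a) by (split; auto; lra).
  destruct (He a Hia) as [Haa Hda]. destruct (He r Hr) as [Hrr Hdr].
  set (y := fun u => e r a * e u r + (-1) * e u a).
  assert (Hy : solves_homogeneous T a b d y).
  { intros u Hu. apply (delta_deriv_eq T y y (e r a * (d u * e u r) + (-1) * (d u * e u a)));
      [reflexivity|unfold y; ring|apply delta_deriv_lin; auto]. }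
  destruct (Req_dec (y a) 0) as [H0|H0].
  - unfold y in H0. rewrite Haa in H0. lra.
  - exfalso. apply (homogeneous_nonvanishing y Hy H0 r Hr).
    unfold y. rewrite Hrr. ring.
Qed.

End HomogeneousEquation.

Lemma Rabs_mul_sub_mul_le p q p0 q0 e : Rabs (p - p0) <= e -> Rabs (q - q0) <= e -> e <= 1 ->
  Rabs (p * q - p0 * q0) <= e * (Rabs p0 + Rabs q0 + 1).
Proof.
  intros H1 H2 He.
  replace (p * q - p0 * q0) with ((p - p0) * q + p0 * (q - q0)) by ring.
  eapply Rle_trans; [apply Rabs_triang|]. rewrite !Rabs_mult.
  assert (Hq : Rabs q <= Rabs q0 + 1) by (pose proof (Rabs_triang_inv q q0); lra).
  assert (Rabs (p - p0) * Rabs q <= e * (Rabs q0 + 1))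
    by (apply Rmult_le_compat; auto; apply Rabs_pos).
  assert (Rabs p0 * Rabs (q - q0) <= Rabs p0 * e) by (apply Rmult_le_compat_l; auto; apply Rabs_pos).
  lra.
Qed.

Lemma cont_on_mul_joint T a b A B t : cont_on T a b A -> cont_on T a b B -> in_ts T a b t ->
  forall eps, 0 < eps -> exists delta, 0 < delta /\ forall p q, in_ts T a b p -> in_ts T a b q ->
    Rabs (p - t) < delta -> Rabs (q - t) < delta -> Rabs (A p * B q - A t * B t) <= eps.
Proof.
  intros HA HB Ht eps Heps.
  assert (Hn : 0 < Rabs (A t) + Rabs (B t) + 1)
    by (pose proof (Rabs_pos (A t)); pose proof (Rabs_pos (B t)); lra).
  set (e := Rmin 1 (eps / (Rabs (A t) + Rabs (B t) + 1))).
  assert (He : 0 < e) by (apply Rmin_glb_lt; [lra|apply Rdiv_lt_0_compat; lra]).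
  destruct (HA t Ht e He) as [d1 [Hd1 H1]]. destruct (HB t Ht e He) as [d2 [Hd2 H2]].
  exists (Rmin d1 d2). split; [apply Rmin_glb_lt; auto|].
  intros p q Hp Hq Hpt Hqt. pose proof (Rmin_l d1 d2); pose proof (Rmin_r d1 d2).
  specialize (H1 p Hp ltac:(lra)). specialize (H2 q Hq ltac:(lra)).
  eapply Rle_trans; [apply Rabs_mul_sub_mul_le; [left; apply H1|left; apply H2|apply Rmin_l]|].
  apply Rle_trans with (eps / (Rabs (A t) + Rabs (B t) + 1) * (Rabs (A t) + Rabs (B t) + 1)).
  - apply Rmult_le_compat_r; [lra|apply Rmin_r].
  - right; field; lra.
Qed.

Lemma abs_RInt_le_const_open g u v C : ex_RInt g u v ->
  (forall x, Rmin u v < x < Rmax u v -> Rabs (g x) <= C) ->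
  Rabs (RInt g u v) <= C * Rabs (v - u).
Proof.
  intros Hg HC.
  enough (Hle : forall u v, u <= v -> ex_RInt g u v ->
            (forall x, u < x < v -> Rabs (g x) <= C) -> Rabs (RInt g u v) <= C * (v - u)).
  { destruct (Rle_dec u v) as [Huv|Huv].
    - rewrite Rmin_left, Rmax_right in HC by lra. rewrite (Rabs_right (v - u)) by lra. auto.
    - rewrite Rmin_right, Rmax_left in HC by lra.
      rewrite <- opp_RInt_swap by (apply ex_RInt_swap; auto). change (opp ?x) with (- x).
      rewrite Rabs_Ropp, (Rabs_left (v - u)) by lra. replace (- (v - u)) with (u - v) by ring.
      apply Hle; [lra|apply ex_RInt_swap; auto|auto]. }
  clear. intros u v Huv Hg HC. eapply Rle_trans; [apply abs_RInt_le; auto|].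
  assert (Hn : ex_RInt (fun t => Rabs (g t)) u v) by apply (ex_RInt_norm g u v Hg).
  eapply Rle_trans; [apply (RInt_le _ (fun _ => C)); auto; apply ex_RInt_const|].
  rewrite RInt_const. change (scal (v - u) C) with ((v - u) * C). lra.
Qed.

Section DeltaIntegral.

Variable T : R -> Prop.
Hypothesis HT : time_scale T.
Variables a b : R.
Hypotheses (Ha : T a) (Hb : T b) (Hab : a < b).

(* [ts_floor x] is the largest point of [a, b]_T not exceeding x, clamped to a below
   and to b above.  Composing with it turns a function on [a, b]_T into a step-like
   function on R whose Riemann integral is the Delta-integral. *)
Definition ts_floor (x : R) : R := if Rlt_dec x b then last_point T a (Rmax a x) else b.

Lemma ts_floor_in x : in_ts T a b (ts_floor x).
Proof.
  unfold ts_floor. destruct (Rlt_dec x b) as [Hxb|Hxb]; [|split; auto; lra].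
  destruct (last_point_spec T HT a (Rmax a x) Ha (Rmax_l a x)) as [H1 [H2 _]].
  split; auto. assert (Rmax a x < b) by (apply Rmax_lub_lt; lra). lra.
Qed.

Lemma ts_floor_low x : x <= a -> ts_floor x = a.
Proof.
  intros Hx. unfold ts_floor. destruct (Rlt_dec x b); [|lra].
  rewrite Rmax_left by lra.
  destruct (last_point_spec T HT a a Ha (Rle_refl a)) as [_ [H2 _]]. lra.
Qed.

Lemma ts_floor_high x : b <= x -> ts_floor x = b.
Proof. intros H. unfold ts_floor. destruct (Rlt_dec x b); lra. Qed.

Lemma ts_floor_mid x : a <= x < b ->
  ts_floor x <= x /\ (forall u, T u -> a <= u <= x -> u <= ts_floor x).
Proof.
  intros Hx. unfold ts_floor. destruct (Rlt_dec x b); [|lra].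
  rewrite Rmax_right by lra.
  destruct (last_point_spec T HT a x Ha (proj1 Hx)) as [_ [H2 H3]]. split; [lra|auto].
Qed.

Lemma ts_floor_const y1 y2 : a <= y1 <= y2 -> y2 < b ->
  (forall u, T u -> y1 < u <= y2 -> False) -> ts_floor y1 = ts_floor y2.
Proof.
  intros Hy Hy2 Hno.
  destruct (ts_floor_mid y1 ltac:(lra)) as [A2 A3].
  destruct (ts_floor_mid y2 ltac:(lra)) as [B2 B3].
  destruct (ts_floor_in y2) as [B1 [B4 _]]. destruct (ts_floor_in y1) as [A1 [A4 _]].
  apply Rle_antisym.
  - apply B3; auto; lra.
  - apply A3; auto. split; [lra|]. apply Rnot_lt_le. intros Hlt.
    apply (Hno _ B1). lra.
Qed.

Lemma ts_floor_between s t x : T s -> T t -> a <= s -> s < t -> t <= b -> s < x < t ->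
  s <= ts_floor x <= x /\ ts_floor x <= fjump T (ts_floor x) <= t.
Proof.
  intros Hs Ht Has Hst Htb Hx.
  destruct (ts_floor_mid x ltac:(lra)) as [H2 H3].
  destruct (ts_floor_in x) as [H1 _].
  assert (s <= ts_floor x) by (apply H3; auto; lra).
  split; [lra|]. split; [apply fjump_ge|]. apply fjump_le; auto; lra.
Qed.

Lemma ts_floor_near_right_dense_point s t x : in_ts T a b t -> fjump T t = t -> T s ->
  (s <= b \/ t = b) -> Rmin s t < x < Rmax s t ->
  ts_floor x = t \/
  (in_ts T a b (fjump T (ts_floor x)) /\
   Rabs (ts_floor x - t) <= Rabs (s - t) /\ Rabs (fjump T (ts_floor x) - t) <= Rabs (s - t)).
Proof.
  intros [Ht Ht2] Hsig Hs Hsb Hx.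
  destruct (ts_floor_in x) as [HpT Hp].
  set (p := ts_floor x) in *.
  pose proof (fjump_ge T p). pose proof (fjump_in T HT p HpT).
  destruct (Rle_dec s t) as [Hst|Hst].
  - rewrite Rmin_left, Rmax_right in Hx by lra.
    destruct (Rle_dec x a) as [Hxa|Hxa].
    + assert (Hpa : p = a) by apply ts_floor_low, Hxa.
      destruct (Rle_lt_or_eq_dec a t (proj1 Ht2)) as [Hat|Hat]; [|left; congruence].
      right. assert (fjump T p <= t) by (rewrite Hpa; apply fjump_le; auto).
      rewrite (Rabs_left1 (s - t)) by lra.
      repeat split; auto; try lra; rewrite Rabs_left1; lra.
    + destruct (ts_floor_mid x ltac:(lra)) as [H2 H3]. fold p in H2, H3.
      assert (s <= p) by (destruct (Rle_dec a s); [apply H3; auto; lra|lra]).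
      assert (fjump T p <= t) by (apply fjump_le; auto; lra).
      right. rewrite (Rabs_left1 (s - t)) by lra.
      repeat split; auto; try lra; rewrite Rabs_left1; lra.
  - rewrite Rmin_right, Rmax_left in Hx by lra.
    destruct Hsb as [Hsb|Htb].
    + destruct (ts_floor_mid x ltac:(lra)) as [H2 H3]. fold p in H2, H3.
      assert (t <= p) by (apply H3; auto; lra).
      assert (fjump T p <= s) by (apply fjump_le; auto; lra).
      right. rewrite (Rabs_right (s - t)) by lra.
      repeat split; auto; try lra; rewrite Rabs_right; lra.
    + left. unfold p. rewrite ts_floor_high; lra.
Qed.

Variables A B : R -> R.
Hypotheses (HA : cont_on T a b A) (HB : cont_on T a b B).

Definition mul_sigma (t : R) : R := A t * B (fjump T t).

Definition step_ext (x : R) : R := mul_sigma (ts_floor x).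

Lemma step_ext_right_regulated x0 : a <= x0 < b ->
  forall eps, 0 < eps -> exists delta, 0 < delta /\ exists c,
    forall x, x0 < x < x0 + delta -> Rabs (step_ext x - c) <= eps.
Proof.
  intros Hx0 eps Heps.
  destruct (classic (exists eta, 0 < eta /\ forall u, T u -> x0 < u < x0 + eta -> False))
    as [[eta [Heta Hno]]|Hn].
  - exists (Rmin eta (b - x0)). split; [apply Rmin_glb_lt; lra|].
    exists (step_ext x0). intros x Hx. pose proof (Rmin_l eta (b - x0)); pose proof (Rmin_r eta (b - x0)).
    unfold step_ext. rewrite (ts_floor_const x0 x); try lra.
    + rewrite Rminus_diag, Rabs_R0; lra.
    + intros u Hu Hu2. apply (Hno u Hu). lra.
  - assert (Hrd : right_dense T x0).
    { intros eta Heta. apply NNPP; intro Hc. apply Hn. exists eta. split; auto.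
      intros u Hu Hu2. apply Hc. exists u; auto. }
    assert (Hx0T : T x0).
    { destruct HT as [_ Hcl]. apply Hcl. intros e He. destruct (Hrd e He) as [u [Hu Hu2]].
      exists u. split; auto. rewrite Rabs_right; lra. }
    assert (Hin0 : in_ts T a b x0) by (split; auto; lra).
    destruct (cont_on_mul_joint T a b A B x0 HA HB Hin0 eps Heps) as [d1 [Hd1 H1]].
    destruct (Hrd (Rmin d1 (b - x0))) as [u [Hu Hu2]]; [apply Rmin_glb_lt; lra|].
    pose proof (Rmin_l d1 (b - x0)); pose proof (Rmin_r d1 (b - x0)).
    exists (u - x0). split; [lra|]. exists (A x0 * B x0). intros x Hx.
    destruct (ts_floor_between x0 u x Hx0T Hu ltac:(lra) ltac:(lra) ltac:(lra) ltac:(lra))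
      as [P1 P2].
    destruct (ts_floor_in x) as [PT _].
    pose proof (fjump_in T HT _ PT) as FT.
    apply H1; try split; auto; try lra; rewrite Rabs_right; lra.
Qed.

Lemma step_ext_left_regulated x0 : a < x0 <= b ->
  forall eps, 0 < eps -> exists delta, 0 < delta /\ exists c,
    forall x, x0 - delta < x < x0 -> Rabs (step_ext x - c) <= eps.
Proof.
  intros Hx0 eps Heps.
  destruct (classic (exists eta, 0 < eta /\ forall u, T u -> x0 - eta < u < x0 -> False))
    as [[eta [Heta Hno]]|Hn].
  - set (y0 := x0 - Rmin eta (x0 - a)).
    exists (Rmin eta (x0 - a)). split; [apply Rmin_glb_lt; lra|].
    pose proof (Rmin_l eta (x0 - a)); pose proof (Rmin_r eta (x0 - a)).
    exists (step_ext y0). intros x Hx.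
    unfold step_ext. rewrite (ts_floor_const y0 x); unfold y0 in *; try lra.
    + rewrite Rminus_diag, Rabs_R0; lra.
    + intros u Hu Hu2. apply (Hno u Hu). lra.
  - assert (Hld : left_dense T x0).
    { intros eta Heta. apply NNPP; intro Hc. apply Hn. exists eta. split; auto.
      intros u Hu Hu2. apply Hc. exists u; auto. }
    assert (Hx0T : T x0).
    { destruct HT as [_ Hcl]. apply Hcl. intros e He. destruct (Hld e He) as [u [Hu Hu2]].
      exists u. split; auto. rewrite Rabs_left; lra. }
    assert (Hin0 : in_ts T a b x0) by (split; auto; lra).
    destruct (cont_on_mul_joint T a b A B x0 HA HB Hin0 eps Heps) as [d1 [Hd1 H1]].
    destruct (Hld (Rmin d1 (x0 - a))) as [u [Hu Hu2]]; [apply Rmin_glb_lt; lra|].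
    pose proof (Rmin_l d1 (x0 - a)); pose proof (Rmin_r d1 (x0 - a)).
    exists (x0 - u). split; [lra|]. exists (A x0 * B x0). intros x Hx.
    destruct (ts_floor_between u x0 x Hu Hx0T ltac:(lra) ltac:(lra) ltac:(lra) ltac:(lra))
      as [P1 P2].
    destruct (ts_floor_in x) as [PT _].
    pose proof (fjump_in T HT _ PT) as FT.
    apply H1; try split; auto; try lra; rewrite Rabs_left1; lra.
Qed.

(* Being regulated, [step_ext] is a uniform limit of Riemann-integrable functions on
   [a, b]: patch them together from left to right with [real_induction]. *)
Lemma step_ext_uniform_approx eps : 0 < eps -> exists s, ex_RInt s a b /\
  forall x, a <= x <= b -> Rabs (s x - step_ext x) <= eps.
Proof.
  intros Heps.
  apply (real_induction a b (fun y => exists s, ex_RInt s a y /\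
           forall x, a <= x <= y -> Rabs (s x - step_ext x) <= eps)); [lra| | |].
  - exists step_ext. split; [apply ex_RInt_point|]. intros x Hx. replace x with a by lra.
    rewrite Rminus_diag, Rabs_R0; lra.
  - intros y Hy [s [Hs1 Hs2]].
    destruct (step_ext_right_regulated y Hy eps Heps) as [d [Hd [c Hc]]].
    exists d. split; auto. intros z Hz.
    exists (fun x => if Rle_dec x y then s x else c). split.
    + apply ex_RInt_Chasles with y.
      * apply ex_RInt_ext with s; auto. intros x Hx.
        rewrite Rmax_right in Hx by lra. destruct (Rle_dec x y); auto; lra.
      * apply ex_RInt_ext with (fun _ => c); [|apply ex_RInt_const]. intros x Hx.
        rewrite Rmin_left in Hx by lra. destruct (Rle_dec x y); auto; lra.
    + intros x Hx. destruct (Rle_dec x y); [apply Hs2; lra|].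
      rewrite Rabs_minus_sym. apply Hc. lra.
  - intros y Hy Hbel.
    destruct (step_ext_left_regulated y Hy eps Heps) as [d [Hd [c Hc]]].
    set (y1 := Rmax a (y - d / 2)).
    assert (Hy1 : a <= y1 < y /\ y - d < y1).
    { unfold y1. split; [split; [apply Rmax_l|apply Rmax_lub_lt; lra]|].
      eapply Rlt_le_trans; [|apply Rmax_r]. lra. }
    destruct (Hbel y1 ltac:(lra)) as [s [Hs1 Hs2]].
    exists (fun x => if Rle_dec x y1 then s x else if Rlt_dec x y then c else step_ext y). split.
    + apply ex_RInt_Chasles with y1.
      * apply ex_RInt_ext with s; auto. intros x Hx.
        rewrite Rmax_right in Hx by lra. destruct (Rle_dec x y1); auto; lra.
      * apply ex_RInt_ext with (fun _ => c); [|apply ex_RInt_const]. intros x Hx.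
        rewrite Rmin_left, Rmax_right in Hx by lra.
        destruct (Rle_dec x y1); [lra|]. destruct (Rlt_dec x y); auto; lra.
    + intros x Hx. destruct (Rle_dec x y1); [apply Hs2; lra|].
      destruct (Rlt_dec x y).
      * rewrite Rabs_minus_sym. apply Hc. lra.
      * replace x with y by lra. rewrite Rminus_diag, Rabs_R0; lra.
Qed.

Lemma ex_RInt_step_ext_ab : ex_RInt step_ext a b.
Proof.
  set (K := step_ext).
  set (sn := fun n : nat => epsilon (inhabits (fun _ : R => 0)) (fun s => ex_RInt s a b /\
    forall x, a <= x <= b -> Rabs (s x - K x) <= / (INR n + 1))).
  assert (Hsn : forall n, ex_RInt (sn n) a b /\
                  forall x, a <= x <= b -> Rabs (sn n x - K x) <= / (INR n + 1)).
  { intro n. unfold sn. apply epsilon_spec, step_ext_uniform_approx.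
    apply Rinv_0_lt_compat. pose proof (pos_INR n); lra. }
  (* modified outside [a, b] so that the convergence is uniform on all of R *)
  set (f := fun (n : nat) (x : R) =>
              if Rle_dec a x then if Rle_dec x b then sn n x else K x else K x).
  assert (Hf : forall n, ex_RInt (f n) a b).
  { intro n. apply ex_RInt_ext with (sn n); [|apply Hsn]. intros x Hx.
    rewrite Rmin_left, Rmax_right in Hx by lra.
    unfold f. destruct (Rle_dec a x); [|lra]. destruct (Rle_dec x b); auto; lra. }
  destruct (filterlim_RInt f a b eventually eventually_filter K (fun n => RInt (f n) a b))
    as [If [_ HIf]].
  - intro n. apply RInt_correct, Hf.
  - intros P [eps Heps].
    destruct (nfloor_ex (/ eps)) as [N [HN1 HN2]]; [left; apply Rinv_0_lt_compat, cond_pos|].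
    exists N. intros n Hn. apply Heps. intro t. change (Rabs (f n t - K t) < eps).
    pose proof (cond_pos eps) as He.
    unfold f. destruct (Rle_dec a t); [destruct (Rle_dec t b)|];
      try (rewrite Rminus_diag, Rabs_R0; exact He).
    eapply Rle_lt_trans; [apply (proj2 (Hsn n)); lra|].
    assert (INR N <= INR n) by (apply le_INR; auto).
    apply Rlt_le_trans with (/ (/ eps)); [|rewrite Rinv_inv; lra].
    apply Rinv_lt_contravar; [|lra].
    apply Rmult_lt_0_compat; [apply Rinv_0_lt_compat; auto|pose proof (pos_INR n); lra].
  - exists If. exact HIf.
Qed.

Lemma ex_RInt_step_ext u v : ex_RInt step_ext u v.
Proof.
  assert (Hbig : forall m M, m <= a -> b <= M -> ex_RInt step_ext m M).
  { intros m M Hm HM. apply ex_RInt_Chasles with a; [|apply ex_RInt_Chasles with b].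
    - apply ex_RInt_ext with (fun _ => step_ext a); [|apply ex_RInt_const].
      intros x Hx. rewrite Rmax_right in Hx by lra.
      unfold step_ext. rewrite !ts_floor_low; lra.
    - apply ex_RInt_step_ext_ab.
    - apply ex_RInt_ext with (fun _ => step_ext b); [|apply ex_RInt_const].
      intros x Hx. rewrite Rmin_left in Hx by lra.
      unfold step_ext. rewrite !ts_floor_high; lra. }
  assert (Hle : forall u v, u <= v -> ex_RInt step_ext u v).
  { intros u' v' Huv.
    pose proof (Rmin_l u' a); pose proof (Rmin_r u' a).
    pose proof (Rmax_l v' b); pose proof (Rmax_r v' b).
    apply (ex_RInt_Chasles_1 step_ext u' v' (Rmax v' b)); [lra|].
    apply (ex_RInt_Chasles_2 step_ext (Rmin u' a) u' (Rmax v' b)); [lra|].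
    apply Hbig; lra. }
  destruct (Rle_dec u v); [apply Hle; auto|].
  apply ex_RInt_swap, Hle. lra.
Qed.

Lemma step_ext_bounded : exists C, forall x, Rabs (step_ext x) <= C.
Proof.
  destruct (ex_RInt_ub _ a b ex_RInt_step_ext_ab) as [M HM].
  rewrite Rmin_left, Rmax_right in HM by lra.
  exists M. intros x.
  destruct (Rle_dec x a); [|destruct (Rle_dec b x)].
  - unfold step_ext. rewrite ts_floor_low, <- (ts_floor_low a) by (auto; lra).
    apply (HM a). lra.
  - unfold step_ext. rewrite ts_floor_high, <- (ts_floor_high b) by lra.
    apply (HM b). lra.
  - apply HM. lra.
Qed.

Lemma RInt_step_ext_remainder t s :
  RInt step_ext a (fjump T t) - RInt step_ext a s - mul_sigma t * (fjump T t - s) =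
  RInt (fun x => step_ext x - mul_sigma t) s (fjump T t).
Proof.
  rewrite (RInt_minus step_ext (fun _ => mul_sigma t))
    by (apply ex_RInt_step_ext || apply ex_RInt_const).
  rewrite RInt_const, <- (RInt_Chasles step_ext a s (fjump T t)) by apply ex_RInt_step_ext.
  change (plus ?x ?y) with (x + y). change (minus ?x ?y) with (x - y).
  change (scal ?x ?y) with (x * y). ring.
Qed.

Lemma step_ext_right_scattered t x : in_ts T a b t -> t < x < fjump T t ->
  step_ext x = mul_sigma t.
Proof.
  intros [Ht Ht2] Hx. unfold step_ext. f_equal.
  destruct (Rlt_dec x b) as [Hxb|Hxb].
  - destruct (ts_floor_mid x ltac:(lra)) as [Hpx Hmax]. destruct (ts_floor_in x) as [HpT _].
    assert (Htp : t <= ts_floor x) by (apply Hmax; auto; lra).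
    apply Rle_antisym; auto. apply Rnot_lt_le. intros Hlt.
    pose proof (fjump_le T t _ HpT Hlt). lra.
  - rewrite ts_floor_high by lra. apply Rle_antisym; [|lra]. apply Rnot_lt_le. intros Htb.
    pose proof (fjump_le T t b Hb Htb). lra.
Qed.

Lemma step_ext_near_right_dense t : in_ts T a b t -> fjump T t = t ->
  forall eps, 0 < eps -> exists delta, 0 < delta /\ forall s, T s -> Rabs (s - t) < delta ->
    forall x, Rmin s t < x < Rmax s t -> Rabs (step_ext x - mul_sigma t) <= eps.
Proof.
  intros Ht Hsig eps Heps.
  assert (Hk : mul_sigma t = A t * B t) by (unfold mul_sigma; rewrite Hsig; auto).
  destruct (cont_on_mul_joint T a b A B t HA HB Ht eps Heps) as [d1 [Hd1 H1]].
  set (delta := if Rlt_dec t b then Rmin d1 (b - t) else d1).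
  assert (Hdelta : 0 < delta /\ delta <= d1 /\ (t < b -> delta <= b - t)).
  { unfold delta. destruct (Rlt_dec t b).
    - repeat split; [apply Rmin_glb_lt; lra|apply Rmin_l|intros; apply Rmin_r].
    - repeat split; auto; [lra|intros; lra]. }
  exists delta. split; [tauto|]. intros s Hs Hst x Hx.
  assert (Hsb : s <= b \/ t = b).
  { destruct (Rlt_dec t b) as [Htb|Htb]; [left|right; destruct Ht; lra].
    destruct Hdelta as [_ [_ Hd]]. specialize (Hd Htb).
    apply Rabs_lt_between' in Hst. lra. }
  destruct (ts_floor_near_right_dense_point s t x Ht Hsig Hs Hsb Hx)
    as [Hp|[Hsig' [Hp1 Hp2]]].
  - unfold step_ext. rewrite Hp, Rminus_diag, Rabs_R0. lra.
  - unfold step_ext. rewrite Hk. apply H1; [apply ts_floor_in|auto|lra|lra].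
Qed.

Lemma delta_deriv_RInt_step_ext t : in_ts T a b t ->
  delta_deriv T (fun y => RInt step_ext a y) (mul_sigma t) t.
Proof.
  intros Ht. set (g := fun x => step_ext x - mul_sigma t).
  assert (Hg : forall u v, ex_RInt g u v).
  { intros u v. apply (ex_RInt_minus step_ext (fun _ => mul_sigma t));
      [apply ex_RInt_step_ext|apply ex_RInt_const]. }
  intros eps Heps.
  destruct (Rle_lt_or_eq_dec t (fjump T t) (fjump_ge T t)) as [Hlt|Heq].
  - set (sg := fjump T t) in *.
    destruct step_ext_bounded as [C HC].
    set (C' := Rabs C + Rabs (mul_sigma t)).
    assert (HC0 : 0 <= C') by (unfold C'; pose proof (Rabs_pos C); pose proof (Rabs_pos (mul_sigma t)); lra).
    set (d2 := eps * (sg - t) / (C' + 1)).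
    assert (Hd2 : 0 < d2) by (apply Rdiv_lt_0_compat; [apply Rmult_lt_0_compat|]; lra).
    exists (Rmin (sg - t) d2). split; [apply Rmin_glb_lt; lra|].
    intros s Hs Hst. unfold sg. rewrite RInt_step_ext_remainder. fold sg g.
    pose proof (Rmin_l (sg - t) d2). pose proof (Rmin_r (sg - t) d2).
    assert (Hs_le : s <= t).
    { apply Rnot_lt_le. intros Hts. pose proof (fjump_le T t s Hs Hts) as Hsgs. fold sg in Hsgs.
      rewrite Rabs_left in Hst by lra. lra. }
    rewrite Rabs_right in Hst by lra.
    rewrite <- (RInt_Chasles g s t sg) by auto. change (plus ?x ?y) with (x + y).
    assert (B1 : Rabs (RInt g t sg) <= 0 * Rabs (sg - t)).
    { apply abs_RInt_le_const_open; auto. rewrite Rmin_left, Rmax_right by lra.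
      intros x Hx. unfold g. rewrite (step_ext_right_scattered t x), Rminus_diag, Rabs_R0 by auto. lra. }
    assert (B2 : Rabs (RInt g s t) <= C' * Rabs (t - s)).
    { apply abs_RInt_le_const_open; auto. intros x _. unfold g, C'.
      eapply Rle_trans; [apply Rabs_triang|]. rewrite Rabs_Ropp.
      pose proof (HC x). pose proof (Rle_abs C). lra. }
    rewrite (Rabs_right (sg - t)) in B1 by lra. rewrite (Rabs_right (t - s)) in B2 by lra.
    rewrite (Rabs_right (sg - s)) by lra.
    assert (C' * (t - s) <= eps * (sg - t)).
    { apply Rle_trans with ((C' + 1) * (t - s)); [nra|].
      apply Rle_trans with ((C' + 1) * d2); [apply Rmult_le_compat_l; lra|].
      right. unfold d2. field. lra. }
    eapply Rle_trans; [apply Rabs_triang|]. nra.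
  - symmetry in Heq.
    destruct (step_ext_near_right_dense t Ht Heq eps Heps) as [delta [Hdelta Hclose]].
    exists delta. split; auto. intros s Hs Hst.
    rewrite RInt_step_ext_remainder, Heq. fold g. rewrite Rabs_minus_sym in Hst.
    apply abs_RInt_le_const_open; auto. apply Hclose; auto.
Qed.

End DeltaIntegral.

Section Continuity.

Variable T : R -> Prop.
Variables a b : R.

Lemma cont_on_of_ts_cont_at h : (forall t, in_ts T a b t -> ts_cont_at T h t) -> cont_on T a b h.
Proof.
  intros H t Ht eps Heps. destruct (H t Ht eps Heps) as [d [Hd Hd2]].
  exists d; split; auto. intros s [Hs _] Hst. apply Hd2; auto.
Qed.

Lemma cont_on_add f g : cont_on T a b f -> cont_on T a b g -> cont_on T a b (fun y => f y + g y).
Proof.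
  intros Hf Hg t Ht eps Heps.
  destruct (Hf t Ht (eps / 2)) as [d1 [Hd1 H1]]; [lra|].
  destruct (Hg t Ht (eps / 2)) as [d2 [Hd2 H2]]; [lra|].
  exists (Rmin d1 d2). split; [apply Rmin_glb_lt; auto|]. intros s Hs Hst.
  pose proof (Rmin_l d1 d2); pose proof (Rmin_r d1 d2).
  specialize (H1 s Hs ltac:(lra)). specialize (H2 s Hs ltac:(lra)).
  replace (f s + g s - (f t + g t)) with ((f s - f t) + (g s - g t)) by ring.
  eapply Rle_lt_trans; [apply Rabs_triang|]. lra.
Qed.

Lemma cont_on_mul f g : cont_on T a b f -> cont_on T a b g -> cont_on T a b (fun y => f y * g y).
Proof.
  intros Hf Hg t Ht eps Heps.
  destruct (cont_on_mul_joint T a b f g t Hf Hg Ht (eps / 2)) as [d [Hd Hd2]]; [lra|].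
  exists d. split; auto. intros s Hs Hst. eapply Rle_lt_trans; [apply Hd2; auto|lra].
Qed.

Lemma cont_on_rd_cont h : cont_on T a b h -> rd_cont T a b h.
Proof.
  intros H t Ht. split.
  - intros _. apply H; auto.
  - intros _. exists (h t). intros eps Heps. destruct (H t Ht eps Heps) as [d [Hd Hd2]].
    exists d. split; auto. intros s Hs Hst. apply Hd2; auto. rewrite Rabs_left; lra.
Qed.

End Continuity.

Lemma Rabs_le_at_left_dense T z t c K : ts_cont_at T z t -> left_dense T t -> c < t ->
  (forall s, T s -> c <= s < t -> Rabs (z s) <= K) -> Rabs (z t) <= K.
Proof.
  intros Hz Hld Hct Hbnd. apply Rle_plus_epsilon. intros ep Hep.
  destruct (Hz ep Hep) as [dl [Hdl Hdl2]].
  destruct (Hld (Rmin dl (t - c))) as [s [Hs Hs2]]; [apply Rmin_glb_lt; lra|].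
  pose proof (Rmin_l dl (t - c)); pose proof (Rmin_r dl (t - c)).
  specialize (Hbnd s Hs ltac:(lra)).
  assert (Hdist : Rabs (s - t) < dl) by (rewrite Rabs_left; lra).
  specialize (Hdl2 s Hs Hdist).
  pose proof (Rabs_triang_inv (z t) (z s)). rewrite Rabs_minus_sym in Hdl2. lra.
Qed.

Section LinearEquation.

Variable T : R -> Prop.
Hypothesis HT : time_scale T.
Variables (a b : R) (d f : R -> R) (e : R -> R -> R).
Hypotheses (Ha : T a) (Hb : T b) (Hab : a < b) (Hd : cont_on T a b d) (Hf : cont_on T a b f).
Hypothesis Hreg : forall t, in_ts T a b t -> 1 + mu T t * d t <> 0.
Hypothesis He : is_exp T a b d e.

Let Hia : in_ts T a b a.
Proof. split; auto; lra. Qed.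

Let E := fun u => e u a.

Let HE : solves_homogeneous T a b d E.
Proof. intros u Hu. apply (He a Hia); auto. Qed.

Lemma is_exp_nonvanishing t : in_ts T a b t -> e t a <> 0.
Proof.
  apply (homogeneous_nonvanishing T HT a b d Ha Hb ltac:(lra) Hd Hreg E HE).
  unfold E. rewrite (proj1 (He a Hia)). lra.
Qed.

Lemma is_exp_fjump_nonvanishing t : in_ts T a b t -> e (fjump T t) a <> 0.
Proof.
  intros Ht. pose proof (delta_deriv_jump T E _ t (proj1 Ht) (HE t Ht)) as Hjump.
  replace (e (fjump T t) a) with ((1 + mu T t * d t) * E t) by (unfold mu, E in *; lra).
  apply Rmult_integral_contrapositive. split; [auto|apply is_exp_nonvanishing; auto].
Qed.

Lemma linear_eq_solution c : exists w wd, C1rd T a b w wd /\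
  (forall t, in_ts T a b t -> wd t - d t * w t - f t = 0) /\ w a = c.
Proof.
  set (B := fun y => / E y).
  assert (HBc : cont_on T a b B).
  { apply cont_on_of_ts_cont_at. intros t Ht.
    apply ts_cont_at_inv; [|apply is_exp_nonvanishing; auto].
    apply (delta_deriv_cont T E (d t * E t)); [apply Ht|auto]. }
  set (I := fun y => RInt (step_ext T a b f B) a y).
  set (w := fun u => E u * (c + I u)).
  set (wd := fun u => d u * w u + f u).
  assert (Hw : forall t, in_ts T a b t -> delta_deriv T w (wd t) t).
  { intros t Ht.
    assert (HI : delta_deriv T (fun u => 1 * c + 1 * I u) (1 * 0 + 1 * (f t * B (fjump T t))) t).
    { apply delta_deriv_lin; [apply delta_deriv_const|].
      apply (delta_deriv_RInt_step_ext T HT a b Ha Hb Hab f B Hf HBc t Ht). }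
    pose proof (delta_deriv_mul T E _ _ _ t (proj1 Ht) (HE t Ht) HI) as Hprod.
    refine (delta_deriv_eq T _ w _ _ t _ _ Hprod); [intro u; unfold w; ring|].
    unfold wd, w, B, E. field. apply is_exp_fjump_nonvanishing; auto. }
  exists w, wd. split; [split|split].
  - exact Hw.
  - apply cont_on_rd_cont, cont_on_add; auto. apply cont_on_mul; auto.
    apply cont_on_of_ts_cont_at. intros t Ht. apply (delta_deriv_cont T w (wd t)); [apply Ht|auto].
  - intros t Ht. unfold wd. ring.
  - unfold w, I, E. rewrite RInt_point, (proj1 (He a Hia)). change zero with 0. ring.
Qed.

(* Dividing by the exponential turns the perturbed homogeneous equation into
   Phi^Delta = h e(a, sigma(.)), which the mean value inequality compares with
   eps F. *)
Lemma perturbed_homogeneous_bound z zd eps F : z a = 0 ->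
  (forall t, in_ts T a b t -> delta_deriv T z (zd t) t) ->
  (forall t, in_ts T a b t -> Rabs (zd t - d t * z t) <= eps) ->
  delta_antideriv T a b (fun s => Rabs (e a (fjump T s))) F ->
  forall t, in_ts T a b t -> (t < b \/ ~ left_dense T t) ->
    Rabs (z t) <= eps * (Rabs (e t a) * (F t - F a)).
Proof.
  intros Hza Hz Hh HF t Ht Hcase.
  set (Phi := fun u => / E u * z u).
  assert (HPhi : forall s, in_ts T a b s ->
            delta_deriv T Phi ((zd s - d s * z s) * / E (fjump T s)) s).
  { intros s Hs.
    pose proof (delta_deriv_inv T E _ s (proj1 Hs) (HE s Hs)
                  (is_exp_nonvanishing s Hs) (is_exp_fjump_nonvanishing s Hs)) as Hinv.
    pose proof (delta_deriv_mul T (fun u => / E u) z _ _ s (proj1 Hs) Hinv (Hz s Hs)) as Hprod.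
    refine (delta_deriv_eq T _ Phi _ _ s (fun u => eq_refl) _ Hprod).
    unfold E. field. split; [apply is_exp_fjump_nonvanishing|apply is_exp_nonvanishing]; auto. }
  assert (Hcmp : Rabs (Phi t - Phi a) <= eps * F t - eps * F a).
  { apply (increment_le T HT a t Phi (fun u => eps * F u)
             (fun s => (zd s - d s * z s) * / E (fjump T s))
             (fun s => eps * Rabs (e a (fjump T s)))); auto; try apply Ht.
    - intros s Hs Hs2. assert (Hin : in_ts T a b s) by (destruct Ht as [_ Ht]; split; auto; lra).
      split; [apply HPhi; auto|]. split.
      + apply delta_deriv_scal, HF; auto. destruct Ht as [_ Ht]; lra.
      + assert (Hsig : in_ts T a b (fjump T s)).
        { split; [apply fjump_in; auto|]. pose proof (fjump_ge T s).
          assert (fjump T s <= t) by (apply fjump_le; [apply Ht|lra]).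
          destruct Ht as [_ Ht]; lra. }
        pose proof (is_exp_mul_inv T HT a b d Ha Hb ltac:(lra) Hd Hreg e He _ Hsig) as Hinv.
        assert (Hea : e a (fjump T s) = / E (fjump T s)).
        { pose proof (is_exp_fjump_nonvanishing s Hin).
          apply (Rmult_eq_reg_r (E (fjump T s))); auto. unfold E in *. rewrite Hinv. field. auto. }
        rewrite Hea, Rabs_mult. apply Rmult_le_compat_r; [apply Rabs_pos|]. apply Hh; auto.
    - intros Hld. destruct Hcase as [Htb|Hn]; [|contradiction].
      split.
      + apply (delta_deriv_cont T Phi ((zd t - d t * z t) * / E (fjump T t))); [apply Ht|]. apply HPhi; auto.
      + apply (delta_deriv_cont T _ (eps * Rabs (e a (fjump T t)))); [apply Ht|].
        apply delta_deriv_scal, HF; [apply Ht|destruct Ht as [_ Ht]; lra]. }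
  unfold Phi in Hcmp. rewrite Hza, Rmult_0_r, Rminus_0_r in Hcmp.
  replace (z t) with (E t * (/ E t * z t)) by (field; apply is_exp_nonvanishing; auto).
  rewrite Rabs_mult. unfold E.
  replace (eps * (Rabs (e t a) * (F t - F a))) with (Rabs (e t a) * (eps * F t - eps * F a)) by ring.
  apply Rmult_le_compat_l; [apply Rabs_pos|auto].
Qed.

(* At a left-dense b the antiderivative F need not be continuous, so the bound
   reaches b through the continuity of z instead. *)
Lemma perturbed_homogeneous_uniform_bound z zd eps F M : z a = 0 ->
  (forall t, in_ts T a b t -> delta_deriv T z (zd t) t) ->
  (forall t, in_ts T a b t -> Rabs (zd t - d t * z t) <= eps) ->
  delta_antideriv T a b (fun s => Rabs (e a (fjump T s))) F ->
  (forall t, in_ts T a b t -> Rabs (e t a) * (F t - F a) <= M) ->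
  forall t, in_ts T a b t -> Rabs (z t) <= eps * M.
Proof.
  intros Hza Hz Hh HF HM.
  assert (Heps : 0 <= eps) by (specialize (Hh a Hia); pose proof (Rabs_pos (zd a - d a * z a)); lra).
  assert (Hzb : forall t, in_ts T a b t -> (t < b \/ ~ left_dense T t) -> Rabs (z t) <= eps * M).
  { intros t Ht Hcase. eapply Rle_trans; [apply (perturbed_homogeneous_bound z zd eps F); auto|].
    apply Rmult_le_compat_l; auto. }
  intros t Ht. pose proof (proj2 Ht) as Ht2.
  destruct (Rlt_dec t b) as [Htb|Htb]; [apply Hzb; auto|].
  destruct (classic (left_dense T t)) as [Hld|Hnld]; [|apply Hzb; auto].
  apply (Rabs_le_at_left_dense T z t a); [|auto|lra|].
  - apply (delta_deriv_cont T z (zd t)); [apply Ht|auto].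
  - intros s Hs Hs2. apply Hzb; [split; auto; lra|left; lra].
Qed.

End LinearEquation.

Theorem mainTheorem2 (T : R -> Prop) (a b : R) (d f : R -> R) (e : R -> R -> R) :
  time_scale T -> T a -> T b -> a < b ->
  cont_on T a b d -> cont_on T a b f ->
  (forall t, in_ts T a b t -> 1 + mu T t * d t <> 0) ->
  is_exp T a b d e ->
  (exists F, delta_antideriv T a b (fun s => Rabs (e a (fjump T s))) F /\
     exists M, forall t, in_ts T a b t -> Rabs (e t a) * (F t - F a) <= M) ->
  exists L, 0 < L /\
    forall eps, 0 < eps ->
    forall g gd, C1rd T a b g gd ->
      (forall t, in_ts T a b t -> Rabs (gd t - d t * g t - f t) <= eps) ->
      exists w wd, C1rd T a b w wd /\
        (forall t, in_ts T a b t -> wd t - d t * w t - f t = 0) /\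
        (forall t, in_ts T a b t -> Rabs (g t - w t) <= L * eps).
Proof.
  intros HT Ha Hb Hab Hd Hf Hreg He [F [HF [M HM]]].
  exists (Rmax M 1). split; [eapply Rlt_le_trans; [|apply Rmax_r]; lra|].
  intros eps Heps g gd [Hg _] Hh.
  destruct (linear_eq_solution T HT a b d f e Ha Hb Hab Hd Hf Hreg He (g a))
    as [w [wd [[Hw Hwrd] [Hweq Hwa]]]].
  exists w, wd. split; [split; auto|split; auto].
  intros t Ht. apply Rle_trans with (eps * M).
  - apply (perturbed_homogeneous_uniform_bound T HT a b d e Ha Hb Hab Hd Hreg He
             (fun u => g u - w u) (fun u => gd u - wd u) eps F M); auto.
    + rewrite Hwa. ring.
    + intros s Hs. apply (delta_deriv_eq T (fun u => 1 * g u + (-1) * w u) _ (1 * gd s + (-1) * wd s));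
        [intro; ring|ring|apply delta_deriv_lin; auto].
    + intros s Hs. specialize (Hweq s Hs).
      replace (gd s - wd s - d s * (g s - w s)) with (gd s - d s * g s - f s) by lra. auto.
  - rewrite (Rmult_comm (Rmax M 1)). apply Rmult_le_compat_l; [lra|apply Rmax_l].
Qed.
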